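(* Let $N=[n]$, let $v:2^N\to\mathbb{R}_+$ be any monotone valuation with $v(\emptyset)=0$, and let $X$ be a maximal decision map for $v$. Then there exists a pure Nash equilibrium $p\in\mathbb{R}^n_+$ of the pricing game defined by $v$ and $X$ with $X(p)=N$.
   Context: Pricing game: $N=[n]$ is a set of services, service $i$ controlled by seller $i$. A buyer has valuation $v:2^N\to\mathbb{R}_+$, monotone ($v(S)\le v(T)$ for $S\subseteq T$) with $v(\emptyset)=0$. For $p\in\mathbb{R}^n_+$, $p(S)=\sum_{j\in S}p_j$ and $D(v;p)=\arg\max_{S\subseteq N}(v(S)-p(S))$. A decision map is $X:\mathbb{R}^n_+\to 2^N$ with $X(p)\in D(v;p)$ for all $p$; it is maximal if for every $p$ there is no $S'\in D(v;p)$ with $X(p)\subsetneq S'$. Seller $i$ chooses a price $p_i\in\mathbb{R}_+$ and has utility $u_i(p)=p_i\cdot\mathbf{1}\{i\in X(p)\}$. A pure Nash equilibrium is a $p$ such that $u_i(p)\ge u_i(p_i',p_{-i})$ for all $i$ and all $p_i'\in\mathbb{R}_+$. *)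

From mathcomp Require Import all_boot all_order all_algebra.
From mathcomp Require Import reals.
Set Implicit Arguments. Unset Strict Implicit. Unset Printing Implicit Defensive.
Import Order.TTheory GRing.Theory Num.Theory.
Local Open Scope ring_scope.

Section Pricing.
Variables (R : realType) (n : nat).

Definition nonneg_prices (p : 'I_n -> R) : Prop := forall i, 0 <= p i.

Definition price_of (p : 'I_n -> R) (S : {set 'I_n}) : R := \sum_(j in S) p j.

Definition valuation (v : {set 'I_n} -> R) : Prop :=
  [/\ forall S : {set 'I_n}, 0 <= v S,
      forall S T : {set 'I_n}, S \subset T -> v S <= v T
    & v set0 = 0].

Definition in_demand (v : {set 'I_n} -> R) (p : 'I_n -> R) (S : {set 'I_n}) : Prop :=
  forall T : {set 'I_n}, v T - price_of p T <= v S - price_of p S.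

Definition decision_map (v : {set 'I_n} -> R) (X : ('I_n -> R) -> {set 'I_n}) : Prop :=
  forall p, nonneg_prices p -> in_demand v p (X p).

Definition maximal_decision_map (v : {set 'I_n} -> R) (X : ('I_n -> R) -> {set 'I_n}) : Prop :=
  decision_map v X /\
  forall p, nonneg_prices p ->
    forall S' : {set 'I_n}, in_demand v p S' -> ~ (X p \proper S').

Definition upd_price (p : 'I_n -> R) (i : 'I_n) (q : R) : 'I_n -> R :=
  fun j => if j == i then q else p j.

Definition seller_utility (X : ('I_n -> R) -> {set 'I_n}) (p : 'I_n -> R) (i : 'I_n) : R :=
  if i \in X p then p i else 0.

Definition pure_NE (X : ('I_n -> R) -> {set 'I_n}) (p : 'I_n -> R) : Prop :=
  nonneg_prices p /\
  forall (i : 'I_n) (q : R), 0 <= q ->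
    seller_utility X (upd_price p i q) i <= seller_utility X p i.

End Pricing.

(** Call prices [p] feasible when [p(U) <= v(N) - v(N \ U)] for every
    coalition [U]: these are exactly the prices at which the grand bundle [N]
    is demanded, so a maximal decision map selects [N].  Starting from zero
    prices, raise each seller's price as far as feasibility allows; afterwards
    every seller [i] lies in a tight coalition [U], i.e. [p(U) = v(N) - v(N \ U)].
    If [i] deviates upwards, the buyer is indifferent between [N \ U] and [N] at
    the old prices and [N \ U] does not contain [i], whereas any bundle
    containing [i] becomes strictly worse than [N]; hence [i] is dropped. *)

From mathcomp Require Import all_boot all_order all_algebra.
From mathcomp Require Import reals.
From mathcomp Require Import lra.
Set Implicit Arguments. Unset Strict Implicit. Unset Printing Implicit Defensive.
Import Order.TTheory GRing.Theory Num.Theory.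
Local Open Scope ring_scope.

Section PriceOf.
Variables (R : realType) (n : nat).

Lemma price_of_upd (p : 'I_n -> R) (k : 'I_n) (x : R) (U : {set 'I_n}) :
  price_of (upd_price p k x) U =
  price_of p U + (if k \in U then x - p k else 0).
Proof.
rewrite /price_of; case: ifP => kU.
  rewrite (bigD1 k) //= (bigD1 k kU) /= /upd_price eqxx.
  rewrite (eq_bigr (fun j => p j)); last by move=> j /andP[_ /negPf ->].
  lra.
rewrite addr0; apply: eq_bigr => j jU; rewrite /upd_price.
by case: eqP => // E; rewrite -E jU in kU.
Qed.

Lemma price_ofT (p : 'I_n -> R) (U : {set 'I_n}) :
  price_of p [set: 'I_n] = price_of p U + price_of p (~: U).
Proof. by rewrite /price_of (big_setID U) /= setTI setTD. Qed.

Lemma price_of_le (p p' : 'I_n -> R) (U : {set 'I_n}) :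
  (forall j, p j <= p' j) -> price_of p U <= price_of p' U.
Proof. by move=> le_pp'; apply: ler_sum => j _. Qed.

End PriceOf.

Section FeasiblePrices.
Variables (R : realType) (n : nat) (v : {set 'I_n} -> R).

Definition removal_loss (U : {set 'I_n}) : R := v [set: 'I_n] - v (~: U).

Definition feasible_prices (p : 'I_n -> R) : Prop :=
  forall U, price_of p U <= removal_loss U.

Definition tight_for (p : 'I_n -> R) (i : 'I_n) : Prop :=
  exists2 U : {set 'I_n}, i \in U & price_of p U = removal_loss U.

Lemma feasible_in_demand_setT (p : 'I_n -> R) :
  feasible_prices p -> in_demand v p [set: 'I_n].
Proof.
move=> feas T; have := feas (~: T).
rewrite /removal_loss setCK (price_ofT p T); lra.
Qed.

Lemma tight_utility_compl (p : 'I_n -> R) (U : {set 'I_n}) :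
  price_of p U = removal_loss U ->
  v (~: U) - price_of p (~: U) = v [set: 'I_n] - price_of p [set: 'I_n].
Proof. by rewrite /removal_loss (price_ofT p U); lra. Qed.

Lemma tight_for_le (p p' : 'I_n -> R) (i : 'I_n) :
  (forall j, p j <= p' j) -> feasible_prices p' ->
  tight_for p i -> tight_for p' i.
Proof.
move=> le_pp' feas' [U iU tU]; exists U => //.
by apply/eqP; rewrite eq_le feas' -tU price_of_le.
Qed.

Hypothesis hv : valuation v.

Lemma removal_loss_ge0 (U : {set 'I_n}) : 0 <= removal_loss U.
Proof. by case: hv => _ mon _; rewrite subr_ge0 mon ?subsetT. Qed.

Lemma feasible_prices0 : feasible_prices (fun _ => 0).
Proof. by move=> U; rewrite /price_of big1 // removal_loss_ge0. Qed.

(* Raise [p k] by the least slack [removal_loss U - p(U)] over coalitions [U]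
   containing [k]; a minimizing coalition becomes tight. *)
Lemma raise_price (p : 'I_n -> R) (k : 'I_n) :
  nonneg_prices p -> feasible_prices p ->
  exists p' : 'I_n -> R, [/\ nonneg_prices p', feasible_prices p',
    forall j, p j <= p' j & tight_for p' k].
Proof.
move=> p_ge0 feas.
pose slack U := removal_loss U - price_of p U.
have kT : k \in [set: 'I_n] by rewrite inE.
have [U0 kU0 minU0] := @arg_minP _ _ _ [set: 'I_n] (fun U => k \in U) slack kT.
have slack_ge0 : 0 <= slack U0 by rewrite subr_ge0.
exists (upd_price p k (p k + slack U0)); split.
- by move=> j; rewrite /upd_price; case: ifP => _; [exact: addr_ge0 | exact: p_ge0].
- move=> U; rewrite price_of_upd; case: ifP => kU; last by rewrite addr0.
  by have := minU0 U kU; rewrite /slack; lra.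
- by move=> j; rewrite /upd_price; case: ifP => [/eqP -> | _]; rewrite ?lerDl.
- by exists U0; rewrite // price_of_upd kU0 /slack; lra.
Qed.

Lemma exists_tight_prices : exists p : 'I_n -> R,
  [/\ nonneg_prices p, feasible_prices p & forall i, tight_for p i].
Proof.
suff /(_ (enum 'I_n)) [p [p_ge0 feas tight]] : forall s : seq 'I_n, exists p : 'I_n -> R,
    [/\ nonneg_prices p, feasible_prices p & forall i, i \in s -> tight_for p i].
  by exists p; split=> // i; apply: tight; rewrite mem_enum.
elim=> [|k s [p [p_ge0 feas tight]]].
  by exists (fun _ => 0); split=> //; exact: feasible_prices0.
have [p' [p'_ge0 feas' le_pp' tight_k]] := raise_price k p_ge0 feas.
exists p'; split=> // i; rewrite inE => /predU1P[-> // | i_s].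
exact: tight_for_le (tight i i_s).
Qed.

End FeasiblePrices.

Section Equilibrium.
Variables (R : realType) (n : nat) (v : {set 'I_n} -> R).
Variable X : ('I_n -> R) -> {set 'I_n}.

Lemma maximal_feasible_setT (p : 'I_n -> R) :
  maximal_decision_map v X -> nonneg_prices p -> feasible_prices v p ->
  X p = [set: 'I_n].
Proof.
move=> [_ max] p_ge0 feas; apply/eqP; apply: contraT => XpN.
by case: (max p p_ge0 _ (feasible_in_demand_setT feas)); rewrite properT.
Qed.

Lemma raised_price_dropped (p : 'I_n -> R) (i : 'I_n) (q : R) :
  decision_map v X -> nonneg_prices p -> feasible_prices v p ->
  tight_for v p i -> 0 <= q -> p i < q -> i \notin X (upd_price p i q).
Proof.
move=> dX p_ge0 feas [U iU tU] q_ge0 lt_pq; apply/negP => iS.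
set S := X _ in iS.
have p'_ge0 : nonneg_prices (upd_price p i q).
  by move=> j; rewrite /upd_price; case: eqP.
have := dX _ p'_ge0 (~: U).
rewrite !price_of_upd iS inE iU /= addr0 -/S.
have := feasible_in_demand_setT feas S.
have := tight_utility_compl tU.
lra.
Qed.

End Equilibrium.

Theorem mainTheorem2 (R : realType) (n : nat)
    (v : {set 'I_n} -> R) (X : ('I_n -> R) -> {set 'I_n}) :
  valuation v -> maximal_decision_map v X ->
  exists p : 'I_n -> R, pure_NE X p /\ X p = [set: 'I_n].
Proof.
move=> hv hX.
have [p [p_ge0 feas tight]] := exists_tight_prices hv.
have XpN := maximal_feasible_setT hX p_ge0 feas.
exists p; split=> //; split=> // i q q_ge0.
rewrite /seller_utility XpN inE {2}/upd_price eqxx.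
case: ifP => [iX | _]; last exact: p_ge0.
rewrite leNgt; apply/negP => lt_pq.
by rewrite (negPf (raised_price_dropped hX.1 p_ge0 feas (tight i) q_ge0 lt_pq)) in iX.
Qed.
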